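(* Under the hypotheses of the preceding limit theorem (iid $X_i$ with continuous $F\in\mathcal{D}(G)$, norming constants $a_n,b_n$, $j(n)/n\to\lambda_1>0$, $k(n)/n\to\lambda_2>\lambda_1$, $\beta_i=\lambda_i/(\lambda_2-\lambda_1)$), for all real $u<y$ with $G(u)<1$, \[ \lim_{n\to\infty}\Pr\left(\frac{X_k-b_n}{a_n}\le y\ \Big|\ \frac{X_j-b_n}{a_n}>u,\ X_j\text{ and }X_k\text{ are records}\right) =\frac{G(y)^{\lambda_2}-G(u)^{\lambda_1}\left(\beta_2G(y)^{\lambda_2-\lambda_1}-\beta_1G(u)^{\lambda_2-\lambda_1}\right)}{\beta_2\left(1-G(u)^{\lambda_1}\right)-\beta_1\left(1-G(u)^{\lambda_2}\right)}. \]
   Context: $X_m$ is a record if $X_m>\max(X_1,\dots,X_{m-1})$; $X_1$ is always a record. $F\in\mathcal{D}(G)$ means $F^n(a_nx+b_n)\to G(x)$ for all $x$, with $G$ a non-degenerate extreme value distribution function. *)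

From Stdlib Require Import Reals.
Open Scope R_scope.

Definition is_sigma_algebra {Omega : Type} (M : (Omega -> Prop) -> Prop) : Prop :=
  M (fun _ => True) /\
  (forall A, M A -> M (fun w => ~ A w)) /\
  (forall A : nat -> Omega -> Prop, (forall n, M (A n)) -> M (fun w => exists n, A n w)).

Definition is_probability {Omega : Type} (M : (Omega -> Prop) -> Prop)
  (P : (Omega -> Prop) -> R) : Prop :=
  is_sigma_algebra M /\
  P (fun _ => True) = 1 /\
  (forall A, M A -> 0 <= P A) /\
  (forall A : nat -> Omega -> Prop,
      (forall n, M (A n)) ->
      (forall m n w, m <> n -> A m w -> A n w -> False) ->
      infinite_sum (fun n => P (A n)) (P (fun w => exists n, A n w))).

Fixpoint prodR (n : nat) (f : nat -> R) : R :=
  match n with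
  | O => 1
  | S m => prodR m f * f (S m)
  end.

(* X_1, X_2, ... (index 0 unused) are random variables, i.i.d. with common
   distribution function F: all finite-dimensional joint distribution
   functions of (X_1,...,X_n) factor as products of F. *)
Definition iid_with_cdf {Omega : Type} (M : (Omega -> Prop) -> Prop)
  (P : (Omega -> Prop) -> R) (X : nat -> Omega -> R) (F : R -> R) : Prop :=
  (forall i x, M (fun w => X i w <= x)) /\
  (forall (n : nat) (x : nat -> R),
      P (fun w => forall i, (1 <= i <= n)%nat -> X i w <= x i)
      = prodR n (fun i => F (x i))).

Definition is_record {Omega : Type} (X : nat -> Omega -> R) (m : nat) (w : Omega) : Prop :=
  forall i, (1 <= i < m)%nat -> X i w < X m w.

Definition gev_std (g z : R) : R :=
  if Req_EM_T g 0 then exp (- exp (- z))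
  else if Rlt_dec 0 (1 + g * z) then exp (- Rpower (1 + g * z) (- / g))
  else if Rlt_dec 0 g then 0 else 1.

Definition is_extreme_value_df (G : R -> R) : Prop :=
  exists g mu sigma, 0 < sigma /\ forall x, G x = gev_std g ((x - mu) / sigma).

Definition in_domain_of_attraction (F G : R -> R) (a b : nat -> R) : Prop :=
  is_extreme_value_df G /\ (forall n, 0 < a n) /\
  forall x, Un_cv (fun n => (F (a n * x + b n)) ^ n) (G x).

(* x^y for x >= 0, y > 0, with 0^y = 0 *)
Definition rpow (x y : R) : R := if Rlt_dec 0 x then Rpower x y else 0.

From Stdlib Require Import Reals Lra Lia Arith FunctionalExtensionality PropExtensionality Classical.
From Coquelicot Require Import Coquelicot.
Open Scope R_scope.

(* Write U = F(lo) and V = F(hi).  For 1 <= j < k the event "X_j > lo, X_j and X_k are records,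
   X_k <= hi" has probability  int_U^V t^(k-j-1) (t^j - U^j)/j dt, an explicit polynomial in U, V.
   Only the joint distribution functions are available, so this is computed without integrals:
   as a function of hi, such a probability has increments over [a, b] squeezed between
   (F b - F a) g(F a) and (F b - F a) g(F b) by products of distribution functions, and F being
   continuous, any such function is an antiderivative of g composed with F (Riemann sums along a
   grid of equal F-steps telescope).  This is applied once to the position of X_j and once to that
   of X_k.  The conditional probability is then a ratio of two such polynomials in
   c_n = F(a_n u + b_n) and v_n = F(a_n y + b_n); since c_n^n -> G(u), v_n^n -> G(y) and
   j_n/n -> lam1, k_n/n -> lam2, one gets c_n^(j_n) -> G(u)^lam1, and so on. *)

Lemma increment_bounds_of_derivative (f g : R -> R) (a b : R) : a <= b ->
  (forall c, a <= c <= b -> derivable_pt_lim f c (g c)) ->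
  (forall x y, a <= x -> x <= y -> y <= b -> g x <= g y) ->
  (b - a) * g a <= f b - f a <= (b - a) * g b.
Proof.
  intros hab hf hg. destruct (Req_dec a b) as [<- | hne]; [rewrite !Rminus_diag; lra |].
  destruct (MVT_cor2 f g a b) as [c [-> hc]]; [lra | exact hf |].
  assert (g a <= g c) by (apply hg; lra). assert (g c <= g b) by (apply hg; lra). nra.
Qed.

Lemma eq0_of_Rabs_le_div_nat (x C : R) :
  (forall m, (1 <= m)%nat -> Rabs x <= C / INR m) -> x = 0.
Proof.
  intro hx. destruct (Req_dec x 0) as [|hne]; [assumption | exfalso].
  pose proof (Rabs_pos_lt x hne) as hpos.
  destruct (archimed_cor1 (Rabs x / (Rabs C + 1))) as [m [hm hm0]].
  { apply Rdiv_lt_0_compat; [lra | pose proof (Rabs_pos C); lra]. }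
  specialize (hx m ltac:(lia)).
  assert (hmR : 0 < INR m) by (apply lt_0_INR; lia).
  assert (hinv : (Rabs C + 1) * / INR m < Rabs x).
  { apply (Rmult_lt_compat_l (Rabs C + 1)) in hm; [| pose proof (Rabs_pos C); lra].
    replace ((Rabs C + 1) * (Rabs x / (Rabs C + 1))) with (Rabs x) in hm
      by (field; pose proof (Rabs_pos C); lra). exact hm. }
  assert (C <= Rabs C) by apply Rle_abs.
  assert (0 < / INR m) by (apply Rinv_0_lt_compat; lra).
  unfold Rdiv in hx. nra.
Qed.

Section Sandwich.

Variables F Psi Phi g : R -> R.
Variables lo hi : R.
Hypothesis F_cont : continuity F.
Hypothesis F_mono : forall x y, x <= y -> F x <= F y.
Hypothesis lo_le_hi : lo <= hi.
Hypothesis Phi_deriv : forall v, F lo <= v <= F hi -> derivable_pt_lim Phi v (g v).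
Hypothesis g_mono : forall v v', F lo <= v -> v <= v' -> v' <= F hi -> g v <= g v'.
Hypothesis Psi_increment : forall a b, lo <= a -> a <= b -> b <= hi ->
  (F b - F a) * g (F a) <= Psi b - Psi a <= (F b - F a) * g (F b).

Let error (x : R) : R := (Psi x - Psi lo) - (Phi (F x) - Phi (F lo)).

Lemma sandwich_step a b : lo <= a -> a <= b -> b <= hi ->
  Rabs (error b - error a) <= (F b - F a) * (g (F b) - g (F a)).
Proof.
  intros hla hab hbh.
  pose proof (F_mono lo a hla). pose proof (F_mono a b hab). pose proof (F_mono b hi hbh).
  assert (hPhi := increment_bounds_of_derivative Phi g (F a) (F b) ltac:(lra)
                    ltac:(intros; apply Phi_deriv; lra) ltac:(intros; apply g_mono; lra)).
  specialize (Psi_increment a b hla hab hbh).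
  unfold error. apply Rabs_le. lra.
Qed.

Lemma sandwich_grid m : (1 <= m)%nat -> forall t, (t <= m)%nat ->
  exists x, lo <= x <= hi /\ F x = F lo + INR t * ((F hi - F lo) / INR m) /\
    Rabs (error x) <= (F hi - F lo) / INR m * (g (F x) - g (F lo)).
Proof.
  intros hm. set (h := (F hi - F lo) / INR m).
  assert (hmR : 0 < INR m) by (apply lt_0_INR; lia).
  assert (hmh : INR m * h = F hi - F lo) by (unfold h; field; lra).
  assert (h0 : 0 <= h).
  { unfold h, Rdiv. pose proof (F_mono lo hi lo_le_hi).
    apply Rmult_le_pos; [lra | left; apply Rinv_0_lt_compat, hmR]. }
  induction t as [| t IH]; intro ht.
  - exists lo. unfold error. rewrite !Rminus_diag, Rmult_0_l, Rabs_R0. lra.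
  - destruct (IH ltac:(lia)) as [x [hx [hFx herr]]].
    assert (hlevel : F x + h <= F hi).
    { rewrite hFx. apply le_INR in ht. rewrite S_INR in ht. nra. }
    destruct (IVT_cor (fun z => F z - (F x + h)) x hi) as [x' [hx' hFx']].
    + apply continuity_minus; [exact F_cont | apply continuity_const; intros ? ?; reflexivity].
    + lra.
    + nra.
    + exists x'. assert (F x' = F x + h) by lra.
      pose proof (sandwich_step x x' ltac:(lra) ltac:(lra) ltac:(lra)) as hstep.
      split; [lra | split; [rewrite S_INR; lra |]].
      replace (error x') with (error x + (error x' - error x)) by ring.
      eapply Rle_trans; [apply Rabs_triang |].
      replace (F x' - F x) with h in hstep by lra. lra.
Qed.

Theorem increment_sandwich : Psi hi - Psi lo = Phi (F hi) - Phi (F lo).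
Proof.
  apply Rminus_diag_uniq. fold (error hi).
  apply (eq0_of_Rabs_le_div_nat _ ((F hi - F lo) * (g (F hi) - g (F lo)))).
  intros m hm. destruct (sandwich_grid m hm m (le_n m)) as [x [hx [hFx herr]]].
  assert (hmR : 0 < INR m) by (apply lt_0_INR; lia).
  assert (hFhi : F x = F hi) by (rewrite hFx; field; lra).
  pose proof (sandwich_step x hi ltac:(lra) ltac:(lra) ltac:(lra)) as hstep.
  rewrite hFhi, Rminus_diag, Rmult_0_l in hstep.
  replace (error hi) with (error x + (error hi - error x)) by ring.
  eapply Rle_trans; [apply Rabs_triang |]. rewrite hFhi in herr.
  replace ((F hi - F lo) * (g (F hi) - g (F lo)) / INR m)
    with ((F hi - F lo) / INR m * (g (F hi) - g (F lo))) by (field; lra). lra.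
Qed.

End Sandwich.

Lemma event_ext {Omega : Type} (A B : Omega -> Prop) :
  (forall w, A w <-> B w) -> A = B.
Proof.
  intro h. apply functional_extensionality. intro w. apply propositional_extensionality, h.
Qed.

Section Probability.

Context {Omega : Type} {M : (Omega -> Prop) -> Prop} {P : (Omega -> Prop) -> R}.
Hypothesis HP : is_probability M P.

Lemma M_True : M (fun _ => True).
Proof. apply HP. Qed.

Lemma M_not A : M A -> M (fun w => ~ A w).
Proof. apply HP. Qed.

Lemma M_exists (A : nat -> Omega -> Prop) :
  (forall n, M (A n)) -> M (fun w => exists n, A n w).
Proof. apply HP. Qed.

Lemma M_ext A B : (forall w, A w <-> B w) -> M A -> M B.
Proof. intro h. rewrite (event_ext A B h). auto. Qed.

Lemma M_False : M (fun _ => False).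
Proof. apply (M_ext (fun _ => ~ True)); [tauto | apply M_not, M_True]. Qed.

Lemma M_or A B : M A -> M B -> M (fun w => A w \/ B w).
Proof.
  intros hA hB. apply (M_ext (fun w => exists n, (if Nat.eqb n 0 then A else B) w)).
  - intro w. split.
    + intros [n hn]. destruct (Nat.eqb n 0); tauto.
    + intros [h | h]; [exists 0%nat | exists 1%nat]; exact h.
  - apply M_exists. intro n. destruct (Nat.eqb n 0); assumption.
Qed.

Lemma M_and A B : M A -> M B -> M (fun w => A w /\ B w).
Proof.
  intros hA hB. apply (M_ext (fun w => ~ (~ A w \/ ~ B w))); [intro; tauto |].
  apply M_not, M_or; apply M_not; assumption.
Qed.

Lemma M_forall_range (A : nat -> Omega -> Prop) (m n : nat) :
  (forall i, M (A i)) -> M (fun w => forall i, (m <= i < n)%nat -> A i w).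
Proof.
  intro hA. induction n as [| n IH].
  - apply (M_ext (fun _ => True)); [split; [intros _ i hi; lia | tauto] | apply M_True].
  - apply (M_ext (fun w => (forall i, (m <= i < n)%nat -> A i w) /\ ((m <= n)%nat -> A n w))).
    + intro w. split.
      * intros [h1 h2] i hi. destruct (Nat.eq_dec i n) as [-> | ]; [apply h2 | apply h1]; lia.
      * intro h. split; intros; apply h; lia.
    + apply M_and; [exact IH |].
      destruct (le_lt_dec m n).
      * apply (M_ext (A n)); [tauto | apply hA].
      * apply (M_ext (fun _ => True)); [split; [lia | tauto] | apply M_True].
Qed.

Lemma P_nonneg A : M A -> 0 <= P A.
Proof. apply HP. Qed.

Lemma P_ext A B : (forall w, A w <-> B w) -> P A = P B.
Proof. intro h. rewrite (event_ext A B h). reflexivity. Qed.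

Lemma P_sigma_additive (A : nat -> Omega -> Prop) :
  (forall n, M (A n)) -> (forall m n w, m <> n -> A m w -> A n w -> False) ->
  infinite_sum (fun n => P (A n)) (P (fun w => exists n, A n w)).
Proof. apply HP. Qed.

Lemma P_False : P (fun _ => False) = 0.
Proof.
  pose proof (P_sigma_additive (fun _ _ => False) (fun _ => M_False) (fun _ _ _ _ h _ => h)) as hsum.
  cbv beta in hsum.
  rewrite (P_ext (fun w => exists _ : nat, False) (fun _ => False)) in hsum
    by (intro; split; [intros [_ []] | tauto]).
  set (c := P (fun _ => False)) in *.
  assert (hpartial : forall n, sum_f_R0 (fun _ => c) n = INR (S n) * c).
  { induction n as [| n IH]; [simpl; ring | rewrite tech5, IH, (S_INR (S n)); ring]. }
  destruct (Req_dec c 0) as [| hc]; [assumption | exfalso].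
  pose proof (Rabs_pos_lt c hc).
  destruct (hsum (Rabs c / 2)) as [N hN]; [lra |].
  specialize (hN (S N) ltac:(lia)). unfold Rdist in hN. rewrite hpartial in hN.
  replace (INR (S (S N)) * c - c) with (INR (S N) * c) in hN by (rewrite (S_INR (S N)); ring).
  rewrite Rabs_mult, Rabs_pos_eq in hN by apply pos_INR.
  assert (1 <= INR (S N)) by (apply (le_INR 1); lia). nra.
Qed.

Lemma P_disjoint_union A B : M A -> M B -> (forall w, A w -> B w -> False) ->
  P (fun w => A w \/ B w) = P A + P B.
Proof.
  intros hA hB hAB.
  set (C n := match n with O => A | 1%nat => B | _ => fun _ => False end).
  assert (hsum : infinite_sum (fun n => P (C n)) (P (fun w => A w \/ B w))).
  { rewrite (P_ext (fun w => A w \/ B w) (fun w => exists n, C n w)).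
    - apply P_sigma_additive.
      + intros [| [| n]]; [exact hA | exact hB | apply M_False].
      + intros [| [| m]] [| [| n]] w hmn; simpl; try tauto; try lia; eauto.
    - intro w. split.
      + intros [h | h]; [exists 0%nat | exists 1%nat]; exact h.
      + intros [[| [| n]] h]; simpl in h; tauto. }
  apply (uniqueness_sum _ _ _ hsum). intros eps heps. exists 1%nat. intros n hn.
  replace (sum_f_R0 (fun n => P (C n)) n) with (P A + P B).
  - unfold Rdist. rewrite Rminus_diag, Rabs_R0. exact heps.
  - induction n as [| n IH]; [lia |]. destruct n as [| n]; [reflexivity |].
    rewrite tech5, <- IH by lia. simpl. rewrite P_False. ring.
Qed.

Lemma P_setminus A B : M A -> M B -> (forall w, B w -> A w) ->
  P (fun w => A w /\ ~ B w) = P A - P B.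
Proof.
  intros hA hB hBA.
  rewrite (P_ext A (fun w => B w \/ (A w /\ ~ B w))).
  - rewrite P_disjoint_union; [ring | exact hB | apply M_and, M_not | tauto]; assumption.
  - intro w. specialize (hBA w). tauto.
Qed.

Lemma P_mono A B : M A -> M B -> (forall w, A w -> B w) -> P A <= P B.
Proof.
  intros hA hB hAB. pose proof (P_setminus B A hB hA hAB).
  pose proof (P_nonneg (fun w => B w /\ ~ A w) (M_and _ _ hB (M_not _ hA))). lra.
Qed.

Lemma P_le_1 A : M A -> P A <= 1.
Proof.
  intro hA. replace 1 with (P (fun _ => True)) by apply HP. apply P_mono; auto using M_True.
Qed.

Lemma P_increasing_union (A : nat -> Omega -> Prop) :
  (forall n, M (A n)) -> (forall n w, A n w -> A (S n) w) ->
  Un_cv (fun n => P (A n)) (P (fun w => exists n, A n w)).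
Proof.
  intros hA hinc.
  assert (hmono : forall m n w, (m <= n)%nat -> A m w -> A n w)
    by (intros m n w hmn; induction hmn; auto).
  set (B n := match n with O => A O | S n' => fun w => A (S n') w /\ ~ A n' w end).
  assert (hB : forall n, M (B n)) by (intros [| n]; [| apply M_and; [| apply M_not]]; apply hA).
  assert (hsum : infinite_sum (fun n => P (B n)) (P (fun w => exists n, A n w))).
  { rewrite (P_ext (fun w => exists n, A n w) (fun w => exists n, B n w)).
    - apply P_sigma_additive; [exact hB |].
      assert (forall m n w, (m < n)%nat -> B m w -> B n w -> False).
      { intros m n w hmn hm hn. destruct n as [| n]; [lia |]. destruct hn as [_ hn].
        apply hn, (hmono m); [lia |].
        destruct m; simpl in hm; tauto. }
      intros m n w hmn hm hn.
      destruct (Nat.lt_total m n) as [h | [h | h]]; [eauto | lia | eauto].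
    - intro w. split.
      + intros [n hn]. induction n as [| n IH]; [exists 0%nat; exact hn |].
        destruct (classic (A n w)); [auto | exists (S n); simpl; tauto].
      + intros [[| n] hn]; simpl in hn; [| exists (S n)]; firstorder. }
  assert (hpartial : forall n, sum_f_R0 (fun n => P (B n)) n = P (A n)).
  { induction n as [| n IH]; [reflexivity |]. rewrite tech5, IH. simpl.
    rewrite P_setminus by auto. ring. }
  intros eps heps. destruct (hsum eps heps) as [N hN]. exists N. intros n hn.
  rewrite <- hpartial. apply hN, hn.
Qed.

End Probability.

(* [record_pair_df j k U V / (j k) = int_U^V t^(k-j-1) (t^j - U^j) / j dt]. *)
Definition record_pair_df (j k : nat) (U V : R) : R :=
  V ^ k - U ^ j * (INR k / INR (k - j) * V ^ (k - j) - INR j / INR (k - j) * U ^ (k - j)).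

Section RecordPairDf.

Variables j k : nat.
Hypothesis j_pos : (1 <= j)%nat.
Hypothesis j_lt_k : (j < k)%nat.

Lemma INR_sub_ne0 : INR (k - j) <> 0.
Proof. apply not_0_INR. lia. Qed.

Lemma record_pair_df_diag U : record_pair_df j k U U = 0.
Proof.
  unfold record_pair_df.
  assert (hUk : U ^ k = U ^ j * U ^ (k - j)) by (rewrite <- pow_add; f_equal; lia).
  pose proof INR_sub_ne0 as hkj. rewrite hUk, minus_INR in * by lia. field. exact hkj.
Qed.

Lemma record_pair_df_derivative U V :
  derivable_pt_lim (fun V => record_pair_df j k U V / (INR j * INR k)) V
    (V ^ (k - j - 1) * ((V ^ j - U ^ j) / INR j)).
Proof.
  apply is_derive_Reals. unfold record_pair_df. auto_derive; [trivial |].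
  replace (pred k) with (k - j - 1 + j)%nat by lia. rewrite pow_add.
  replace (pred (k - j)) with (k - j - 1)%nat by lia.
  pose proof INR_sub_ne0. field. repeat split; auto; apply not_0_INR; lia.
Qed.

End RecordPairDf.

Lemma prodR_ext n f g : (forall i, (1 <= i <= n)%nat -> f i = g i) -> prodR n f = prodR n g.
Proof.
  induction n as [| n IH]; intro h; simpl; [reflexivity |].
  rewrite IH, (h (S n)); [reflexivity | lia | intros; apply h; lia].
Qed.

Lemma prodR_add m n f : prodR (m + n) f = prodR m f * prodR n (fun i => f (m + i)%nat).
Proof.
  induction n as [| n IH]; simpl; [rewrite Nat.add_0_r; ring |].
  rewrite Nat.add_succ_r. simpl. rewrite IH. ring.
Qed.

Lemma prodR_const n c : prodR n (fun _ => c) = c ^ n.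
Proof. induction n as [| n IH]; simpl; [reflexivity | rewrite IH; ring]. Qed.

Definition profile (j k : nat) (a x c z : R) (i : nat) : R :=
  if (i <? j)%nat then a else if (i =? j)%nat then x else if (i <? k)%nat then c else z.

Section Profile.

Variables j k : nat.
Hypothesis j_pos : (1 <= j)%nat.
Hypothesis j_lt_k : (j < k)%nat.
Variables a x c z : R.

Lemma profile_before i : (i < j)%nat -> profile j k a x c z i = a.
Proof. intro h. unfold profile. rewrite (proj2 (Nat.ltb_lt i j) h). reflexivity. Qed.

Lemma profile_at_j : profile j k a x c z j = x.
Proof. unfold profile. rewrite Nat.ltb_irrefl, Nat.eqb_refl. reflexivity. Qed.

Lemma profile_between i : (j < i < k)%nat -> profile j k a x c z i = c.
Proof.
  intro h. unfold profile.
  rewrite (proj2 (Nat.ltb_ge i j)), (proj2 (Nat.eqb_neq i j)), (proj2 (Nat.ltb_lt i k)) by lia.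
  reflexivity.
Qed.

Lemma profile_at_k : profile j k a x c z k = z.
Proof.
  unfold profile. rewrite (proj2 (Nat.ltb_ge k j)), (proj2 (Nat.eqb_neq k j)), Nat.ltb_irrefl by lia.
  reflexivity.
Qed.

Lemma prodR_profile (f : R -> R) :
  prodR k (fun i => f (profile j k a x c z i)) = f a ^ (j - 1) * f x * f c ^ (k - j - 1) * f z.
Proof.
  replace k with (j - 1 + 1 + (k - j - 1 + 1))%nat at 1 by lia. rewrite !prodR_add. simpl prodR.
  rewrite (prodR_ext (j - 1) _ (fun _ => f a)), (prodR_ext (k - j - 1) _ (fun _ => f c)),
    !prodR_const.
  - replace (j - 1 + 1)%nat with j by lia. replace (j + (k - j - 1 + 1))%nat with k by lia.
    rewrite profile_at_j, profile_at_k. ring.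
  - intros i hidx. rewrite profile_between by lia. reflexivity.
  - intros i hidx. rewrite profile_before by lia. reflexivity.
Qed.

Lemma profile_bound_iff (Y : nat -> R) :
  (forall i, (1 <= i <= k)%nat -> Y i <= profile j k a x c z i) <->
  (forall i, (1 <= i < j)%nat -> Y i <= a) /\ Y j <= x /\
  (forall i, (j < i < k)%nat -> Y i <= c) /\ Y k <= z.
Proof.
  split.
  - intro h. repeat split.
    + intros i hidx. rewrite <- (profile_before i) by lia. apply h. lia.
    + rewrite <- profile_at_j. apply h. lia.
    + intros i hidx. rewrite <- (profile_between i) by lia. apply h. lia.
    + rewrite <- profile_at_k. apply h. lia.
  - intros [ha [hx [hc hz]]] i hidx.
    destruct (Nat.lt_total i j) as [hij | [-> | hij]];
      [rewrite profile_before by lia; apply ha; lia | rewrite profile_at_j; exact hx |].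
    destruct (Nat.lt_total i k) as [hik | [-> | hik]];
      [rewrite profile_between by lia; apply hc; lia | rewrite profile_at_k; exact hz | lia].
Qed.

End Profile.

Lemma nat_fraction_between x y : x < y ->
  exists p q r : nat, x < (INR p - INR q) / INR (S r) < y.
Proof.
  intro hxy. destruct (archimed_cor1 (y - x)) as [[| r] [hr hr0]]; [lra | lia |].
  set (z := up (x * INR (S r))). destruct (archimed (x * INR (S r))) as [hz1 hz2].
  exists (Z.to_nat z), (Z.to_nat (- z)), r.
  replace (INR (Z.to_nat z) - INR (Z.to_nat (- z))) with (IZR z)
    by (rewrite !INR_IZR_INZ, <- minus_IZR; f_equal; lia).
  assert (hS : 0 < INR (S r)) by (apply lt_0_INR; lia).
  assert (hgap : 1 < (y - x) * INR (S r)).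
  { apply (Rmult_lt_compat_r (INR (S r))) in hr; [| exact hS].
    rewrite Rinv_l in hr by lra. exact hr. }
  split; apply (Rmult_lt_reg_r (INR (S r))); try exact hS;
    unfold Rdiv; rewrite Rmult_assoc, Rinv_l, Rmult_1_r by lra; fold z in hz1, hz2; lra.
Qed.

Section IID.

Context {Omega : Type} {M : (Omega -> Prop) -> Prop} {P : (Omega -> Prop) -> R}.
Hypothesis HP : is_probability M P.
Context {X : nat -> Omega -> R} {F : R -> R}.
Hypothesis Hiid : iid_with_cdf M P X F.
Hypothesis Hcont : continuity F.

Lemma M_le i x : M (fun w => X i w <= x).
Proof. apply Hiid. Qed.

Lemma M_gt i x : M (fun w => x < X i w).
Proof. apply (M_ext (fun w => ~ X i w <= x)); [intro; lra | apply (M_not HP), M_le]. Qed.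

Lemma M_lt i m : M (fun w => X i w < X m w).
Proof.
  apply (M_ext (fun w => exists p q r : nat,
    X i w <= (INR p - INR q) / INR (S r) /\ (INR p - INR q) / INR (S r) < X m w)).
  - intro w. split.
    + intros [p [q [r hpqr]]]. lra.
    + intro h. destruct (nat_fraction_between _ _ h) as [p [q [r hpqr]]].
      exists p, q, r. lra.
  - do 3 (apply (M_exists HP); intro). apply (M_and HP); [apply M_le | apply M_gt].
Qed.

Lemma M_record m : M (is_record X m).
Proof. apply (M_forall_range HP (fun i w => X i w < X m w)). intro. apply M_lt. Qed.

Lemma F_cdf x : P (fun w => X 1 w <= x) = F x.
Proof.
  destruct Hiid as [_ hprod]. specialize (hprod 1%nat (fun _ => x)). simpl in hprod.
  rewrite <- (P_ext (fun w => forall i, (1 <= i <= 1)%nat -> X i w <= x)); [lra |].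
  intro w. split; [intro h; apply h; lia | intros h i hi; replace i with 1%nat by lia; exact h].
Qed.

Lemma F_mono x y : x <= y -> F x <= F y.
Proof. intro h. rewrite <- !F_cdf. apply (P_mono HP); try apply M_le. intros; lra. Qed.

Lemma F_range x : 0 <= F x <= 1.
Proof. rewrite <- F_cdf. split; [apply (P_nonneg HP) | apply (P_le_1 HP)]; apply M_le. Qed.

Lemma F_tends_to_1 x : Un_cv (fun N => F (x + INR N)) 1.
Proof.
  replace 1 with (P (fun _ => True)) by apply HP.
  rewrite (P_ext (fun _ => True) (fun w => exists N, X 1 w <= x + INR N)).
  - apply (Un_cv_ext (fun N => P (fun w => X 1 w <= x + INR N))); [intro; apply F_cdf |].
    apply (P_increasing_union HP); [intro; apply M_le |].
    intros N w hN. rewrite S_INR. lra.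
  - intro w. split; [intros _ | tauto].
    destruct (INR_archimed 1 (X 1 w - x)) as [N hN]; [lra | exists N; lra].
Qed.

Lemma P_band (A : Omega -> Prop) i a b : M A -> a <= b ->
  P (fun w => A w /\ a < X i w <= b)
  = P (fun w => A w /\ X i w <= b) - P (fun w => A w /\ X i w <= a).
Proof.
  intros hA hab. rewrite <- (P_setminus HP); try (apply (M_and HP); [exact hA | apply M_le]).
  - apply P_ext. intro w. split.
    + intros [h1 [h2 h3]]. split; [tauto | intros [_ h4]; lra].
    + intros [[h1 h2] h3]. repeat split; [exact h1 | | exact h2].
      apply Rnot_le_lt. intro. apply h3. tauto.
  - intros w [h1 h2]. split; [exact h1 | lra].
Qed.

Section Records.

Variables j k : nat.
Hypothesis j_pos : (1 <= j)%nat.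
Hypothesis j_lt_k : (j < k)%nat.

Definition before_j_le (a : R) (w : Omega) : Prop := forall i, (1 <= i < j)%nat -> X i w <= a.
Definition between_j_k_le (c : R) (w : Omega) : Prop := forall i, (j < i < k)%nat -> X i w <= c.

Lemma M_before_j_le a : M (before_j_le a).
Proof. apply (M_forall_range HP (fun i w => X i w <= a)). intro. apply M_le. Qed.

Lemma M_between_j_k_le c : M (between_j_k_le c).
Proof.
  apply (M_ext (fun w => forall i, (S j <= i < k)%nat -> X i w <= c)).
  - intro w. split; intros h i hi; apply h; lia.
  - apply (M_forall_range HP (fun i w => X i w <= c)). intro. apply M_le.
Qed.

Local Ltac measurable :=
  repeat apply (M_and HP); auto using M_le, M_gt, M_record, M_before_j_le, M_between_j_k_le.

Lemma P_rect a x c z :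
  P (fun w => before_j_le a w /\ X j w <= x /\ between_j_k_le c w /\ X k w <= z)
  = F a ^ (j - 1) * F x * F c ^ (k - j - 1) * F z.
Proof.
  rewrite (P_ext _ (fun w => forall i, (1 <= i <= k)%nat -> X i w <= profile j k a x c z i)).
  - destruct Hiid as [_ ->]. apply prodR_profile; assumption.
  - intro w. symmetry. apply profile_bound_iff; assumption.
Qed.

Lemma P_box a lj x c lk z : lj <= x -> lk <= z ->
  P (fun w => before_j_le a w /\ lj < X j w <= x /\ between_j_k_le c w /\ lk < X k w <= z)
  = F a ^ (j - 1) * (F x - F lj) * F c ^ (k - j - 1) * (F z - F lk).
Proof.
  intros hx hz.
  assert (hband_j : forall z',
    P (fun w => (before_j_le a w /\ lj < X j w <= x /\ between_j_k_le c w) /\ X k w <= z')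
    = F a ^ (j - 1) * (F x - F lj) * F c ^ (k - j - 1) * F z').
  { intro z'.
    rewrite (P_ext _ (fun w => (before_j_le a w /\ between_j_k_le c w /\ X k w <= z')
                               /\ lj < X j w <= x)) by (intro; tauto).
    rewrite P_band by measurable.
    assert (hrect : forall x',
      P (fun w => (before_j_le a w /\ between_j_k_le c w /\ X k w <= z') /\ X j w <= x')
      = F a ^ (j - 1) * F x' * F c ^ (k - j - 1) * F z').
    { intro x'. rewrite <- P_rect. apply P_ext. intro; tauto. }
    rewrite !hrect. ring. }
  rewrite (P_ext _ (fun w => (before_j_le a w /\ lj < X j w <= x /\ between_j_k_le c w)
                             /\ lk < X k w <= z)) by (intro; tauto).
  rewrite P_band, !hband_j by (exact hz || measurable).
  ring.
Qed.

Lemma record_band_increment_bounds a b c lk z : a <= b -> lk <= z ->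
  F a ^ (j - 1) * (F b - F a) * F c ^ (k - j - 1) * (F z - F lk)
  <= P (fun w => (is_record X j w /\ between_j_k_le c w /\ lk < X k w <= z) /\ a < X j w <= b)
  <= F b ^ (j - 1) * (F b - F a) * F c ^ (k - j - 1) * (F z - F lk).
Proof.
  intros hab hz. rewrite <- !P_box by lra.
  split; apply (P_mono HP); try measurable.
  - intros w [ha [hj [hc hk]]]. refine (conj (conj _ (conj hc hk)) hj).
    intros i hidx. specialize (ha i hidx). lra.
  - intros w [[hr [hc hk]] hj]. refine (conj _ (conj hj (conj hc hk))).
    intros i hidx. specialize (hr i hidx). lra.
Qed.

Lemma P_record_band lo t c lk z : lo <= t -> lk <= z ->
  P (fun w => (is_record X j w /\ between_j_k_le c w /\ lk < X k w <= z) /\ lo < X j w <= t)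
  = F c ^ (k - j - 1) * (F z - F lk) * ((F t ^ j - F lo ^ j) / INR j).
Proof.
  intros ht hz. set (C := F c ^ (k - j - 1) * (F z - F lk)).
  set (A w := is_record X j w /\ between_j_k_le c w /\ lk < X k w <= z).
  assert (hA : M A) by measurable.
  assert (hC : 0 <= C).
  { apply Rmult_le_pos; [apply pow_le, F_range | pose proof (F_mono lk z hz); lra]. }
  assert (hjR : INR j <> 0) by (apply not_0_INR; lia).
  rewrite P_band by assumption.
  transitivity ((fun V => C * (V ^ j / INR j)) (F t) - (fun V => C * (V ^ j / INR j)) (F lo));
    [| cbv beta; field; exact hjR].
  apply (increment_sandwich F (fun s => P (fun w => A w /\ X j w <= s))
           (fun V => C * (V ^ j / INR j)) (fun V => C * V ^ (j - 1)));
    auto using F_mono.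
  - intros V _. apply is_derive_Reals. auto_derive; [trivial |].
    replace (pred j) with (j - 1)%nat by lia. field. exact hjR.
  - intros V V' hV hVV' _. apply Rmult_le_compat_l; [exact hC |].
    apply pow_incr. pose proof (F_range lo). lra.
  - intros a b _ hab _. rewrite <- P_band by assumption.
    pose proof (record_band_increment_bounds a b c lk z hab hz). unfold C, A. lra.
Qed.

Lemma record_pair_increment_bounds lo a b : lo <= a -> a <= b ->
  F a ^ (k - j - 1) * (F b - F a) * ((F a ^ j - F lo ^ j) / INR j)
  <= P (fun w => (lo < X j w /\ is_record X j w /\ is_record X k w) /\ a < X k w <= b)
  <= F b ^ (k - j - 1) * (F b - F a) * ((F b ^ j - F lo ^ j) / INR j).
Proof.
  intros hla hab.
  rewrite <- (P_record_band lo a a a b), <- (P_record_band lo b b a b) by lra.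
  split; apply (P_mono HP); try measurable.
  - intros w [[hr [hc hk]] hj]. repeat split; try tauto.
    intros i hidx. destruct (Nat.lt_total i j) as [hij | [-> | hij]].
    + specialize (hr i ltac:(lia)). lra.
    + lra.
    + specialize (hc i ltac:(lia)). lra.
  - intros w [[hj [hrj hrk]] hk].
    assert (X j w < X k w) by (apply hrk; lia).
    repeat split; try tauto; try lra.
    intros i hidx. specialize (hrk i ltac:(lia)). lra.
Qed.

Lemma P_record_pair_below lo hi : lo <= hi ->
  P (fun w => (lo < X j w /\ is_record X j w /\ is_record X k w) /\ X k w <= hi)
  = record_pair_df j k (F lo) (F hi) / (INR j * INR k).
Proof.
  intro hhi. set (A w := lo < X j w /\ is_record X j w /\ is_record X k w).
  assert (hA : M A) by measurable.
  assert (hlo : P (fun w => A w /\ X k w <= lo) = 0).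
  { rewrite (P_ext _ (fun _ => False)); [exact (P_False HP) |].
    intro w. split; [intros [[hj [_ hrk]] hk] | tauto].
    assert (X j w < X k w) by (apply hrk; lia). lra. }
  transitivity (P (fun w => A w /\ X k w <= hi) - P (fun w => A w /\ X k w <= lo));
    [rewrite hlo, Rminus_0_r; reflexivity |].
  rewrite (increment_sandwich F (fun s => P (fun w => A w /\ X k w <= s))
             (fun V => record_pair_df j k (F lo) V / (INR j * INR k))
             (fun V => V ^ (k - j - 1) * ((V ^ j - F lo ^ j) / INR j)));
    auto using F_mono.
  - rewrite record_pair_df_diag by assumption. unfold Rdiv at 2. ring.
  - intros V _. apply record_pair_df_derivative; assumption.
  - intros V V' hV hVV' _. pose proof (F_range lo).
    assert (hj : 0 < / INR j) by (apply Rinv_0_lt_compat, lt_0_INR; lia).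
    pose proof (pow_incr (F lo) V j ltac:(lra)). pose proof (pow_incr V V' j ltac:(lra)).
    apply Rmult_le_compat; [apply pow_le; lra | | apply pow_incr; lra |]; unfold Rdiv; nra.
  - intros a b hla hab _. rewrite <- P_band by assumption.
    pose proof (record_pair_increment_bounds lo a b hla hab). unfold A. lra.
Qed.

Lemma P_record_pair lo :
  P (fun w => lo < X j w /\ is_record X j w /\ is_record X k w)
  = record_pair_df j k (F lo) 1 / (INR j * INR k).
Proof.
  set (A w := lo < X j w /\ is_record X j w /\ is_record X k w).
  apply (UL_sequence (fun N => P (fun w => A w /\ X k w <= lo + INR N))).
  - rewrite (P_ext A (fun w => exists N, A w /\ X k w <= lo + INR N)).
    + apply (P_increasing_union HP).
      * intro. measurable.
      * intros N w [hw hN]. rewrite S_INR. split; [exact hw | lra].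
    + intro w. split; [intro hw | intros [_ [hw _]]; exact hw].
      destruct (INR_archimed 1 (X k w - lo)) as [N hN]; [lra | exists N; split; [exact hw | lra]].
  - apply (Un_cv_ext (fun N => record_pair_df j k (F lo) (F (lo + INR N)) / (INR j * INR k))).
    + intro N. symmetry. apply P_record_pair_below. pose proof (pos_INR N). lra.
    + apply (continuity_seq (fun V => record_pair_df j k (F lo) V / (INR j * INR k))).
      * apply derivable_continuous_pt. eexists. apply record_pair_df_derivative; assumption.
      * apply F_tends_to_1.
Qed.

Lemma P_record_pair_ratio lo hi : lo <= hi ->
  P (fun w => (lo < X j w /\ is_record X j w /\ is_record X k w) /\ X k w <= hi)
  / P (fun w => lo < X j w /\ is_record X j w /\ is_record X k w)
  = record_pair_df j k (F lo) (F hi) / record_pair_df j k (F lo) 1.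
Proof.
  intro hhi. rewrite P_record_pair_below, P_record_pair by assumption.
  assert (hjk : INR j * INR k <> 0)
    by (apply Rmult_integral_contrapositive; split; apply not_0_INR; lia).
  set (x := record_pair_df j k (F lo) (F hi)). set (z := record_pair_df j k (F lo) 1).
  unfold Rdiv. rewrite (Rinv_mult z), Rinv_inv.
  transitivity (x * / z * (INR j * INR k * / (INR j * INR k))); [ring |].
  rewrite Rinv_r by exact hjk. ring.
Qed.

End Records.
End IID.

Lemma eventually_near (u : nat -> R) (l eps : R) :
  is_lim_seq u l -> 0 < eps -> eventually (fun n => Rabs (u n - l) < eps).
Proof. intros hu heps. exact (proj2 (is_lim_seq_spec u l) hu (mkposreal eps heps)). Qed.

Lemma pow_antitone c m n : 0 <= c <= 1 -> (m <= n)%nat -> c ^ n <= c ^ m.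
Proof.
  intros hc hmn. replace n with (m + (n - m))%nat by lia. rewrite pow_add.
  pose proof (pow_le c m (proj1 hc)). pose proof (pow_le c (n - m) (proj1 hc)).
  assert (c ^ (n - m) <= 1) by (rewrite <- (pow1 (n - m)); apply pow_incr; lra). nra.
Qed.

Lemma rpow_mul_sub g l1 l2 : rpow g l1 * rpow g (l2 - l1) = rpow g l2.
Proof.
  unfold rpow. destruct (Rlt_dec 0 g); [| ring].
  rewrite <- Rpower_plus. f_equal. ring.
Qed.

Lemma is_lim_seq_pow_ge0 (c : nat -> R) (g : R) :
  (forall n, 0 <= c n) -> is_lim_seq (fun n => c n ^ n) g -> 0 <= g.
Proof.
  intros hc hg.
  apply (is_lim_seq_le (fun _ => 0) (fun n => c n ^ n) 0 g); auto using is_lim_seq_const.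
  intro n. apply pow_le, hc.
Qed.

Lemma is_lim_seq_pow_rate_0 (c : nat -> R) (e : nat -> nat) (lam : R) :
  (forall n, 0 <= c n <= 1) -> is_lim_seq (fun n => c n ^ n) 0 ->
  is_lim_seq (fun n => INR (e n) / INR n) lam -> 0 < lam ->
  is_lim_seq (fun n => c n ^ e n) 0.
Proof.
  intros hc hg he hlam.
  (* once [K e_n >= n], [(c_n^(e_n))^K <= c_n^n] is eventually below [eps^K] *)
  destruct (INR_archimed (lam / 2) 1) as [K hK]; [lra |].
  apply is_lim_seq_spec. intro eps. set (ep := Rmin eps 1).
  assert (hep : 0 < ep <= 1)
    by (unfold ep; apply Rmin_case_strong; intros; pose proof (cond_pos eps); lra).
  destruct (eventually_near _ _ (lam / 2) he ltac:(lra)) as [N1 hN1].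
  destruct (eventually_near _ _ (ep ^ K) hg ltac:(apply pow_lt; lra)) as [N2 hN2].
  exists (max (max N1 N2) 1). intros n hn.
  specialize (hN1 n ltac:(lia)). specialize (hN2 n ltac:(lia)).
  apply Rabs_def2 in hN1. rewrite Rminus_0_r, Rabs_pos_eq in hN2 by apply pow_le, hc.
  rewrite Rminus_0_r, Rabs_pos_eq by apply pow_le, hc.
  assert (hn0 : 0 < INR n) by (apply lt_0_INR; lia).
  assert (hKe : (n <= e n * K)%nat).
  { apply INR_le. rewrite mult_INR.
    assert (lam / 2 * INR n < INR (e n)).
    { apply (Rmult_lt_reg_r (/ INR n)); [apply Rinv_0_lt_compat, hn0 |].
      replace (lam / 2 * INR n * / INR n) with (lam / 2) by (field; lra). unfold Rdiv in hN1. lra. }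
    pose proof (pos_INR K). nra. }
  assert (hpow : (c n ^ e n) ^ K <= c n ^ n) by (rewrite <- pow_mult; apply pow_antitone; auto).
  assert (c n ^ e n < ep).
  { destruct (Rlt_le_dec (c n ^ e n) ep) as [| hge]; [assumption |].
    pose proof (pow_incr ep (c n ^ e n) K ltac:(lra)). lra. }
  pose proof (Rmin_l eps 1). unfold ep in *. lra.
Qed.

Lemma is_lim_seq_pow_rate (c : nat -> R) (e : nat -> nat) (g lam : R) :
  (forall n, 0 <= c n <= 1) -> is_lim_seq (fun n => c n ^ n) g ->
  is_lim_seq (fun n => INR (e n) / INR n) lam -> 0 < lam ->
  is_lim_seq (fun n => c n ^ e n) (rpow g lam).
Proof.
  intros hc hg he hlam.
  assert (g0 : 0 <= g) by (apply (is_lim_seq_pow_ge0 c); [intro; apply hc | exact hg]).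
  unfold rpow. destruct (Rlt_dec 0 g) as [gpos | gnpos].
  - apply (is_lim_seq_ext_loc (fun n => exp (INR (e n) / INR n * ln (c n ^ n)))).
    + destruct (eventually_near _ _ (g / 2) hg ltac:(lra)) as [N hN].
      exists (max N 1). intros n hn. specialize (hN n ltac:(lia)). apply Rabs_def2 in hN.
      assert (hcn : 0 < c n).
      { destruct (proj1 (hc n)) as [| h0]; [assumption |].
        rewrite <- h0, pow_i in hN by lia. lra. }
      rewrite ln_pow by exact hcn. rewrite <- Rpower_pow by exact hcn.
      unfold Rpower. f_equal. field. apply not_0_INR. lia.
    + apply (is_lim_seq_continuous exp (fun n => INR (e n) / INR n * ln (c n ^ n)) (lam * ln g)).
      * apply derivable_continuous_pt. eexists. apply derivable_pt_lim_exp.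
      * apply is_lim_seq_mult'; [exact he |].
        apply (is_lim_seq_continuous ln); [| exact hg].
        apply derivable_continuous_pt. eexists. apply derivable_pt_lim_ln, gpos.
  - replace g with 0 in hg by lra. exact (is_lim_seq_pow_rate_0 c e lam hc hg he hlam).
Qed.

Lemma eventually_index_order (j k : nat -> nat) (lam1 lam2 : R) : 0 < lam1 -> lam1 < lam2 ->
  is_lim_seq (fun n => INR (j n) / INR n) lam1 -> is_lim_seq (fun n => INR (k n) / INR n) lam2 ->
  eventually (fun n => (1 <= n)%nat /\ (1 <= j n)%nat /\ (j n < k n)%nat).
Proof.
  intros hlam1 hlam12 hj hk.
  destruct (eventually_near _ _ (lam1 / 2) hj ltac:(lra)) as [N1 hN1].
  destruct (eventually_near _ _ ((lam2 - lam1) / 2) hj ltac:(lra)) as [N2 hN2].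
  destruct (eventually_near _ _ ((lam2 - lam1) / 2) hk ltac:(lra)) as [N3 hN3].
  exists (max (max N1 N2) (max N3 1)). intros n hn.
  specialize (hN1 n ltac:(lia)). specialize (hN2 n ltac:(lia)). specialize (hN3 n ltac:(lia)).
  apply Rabs_def2 in hN1, hN2, hN3.
  assert (hnR : 0 < INR n) by (apply lt_0_INR; lia).
  split; [lia | split].
  - destruct (Nat.eq_dec (j n) 0) as [E |]; [| lia]. rewrite E, INR_0, Rdiv_0_l in hN1. lra.
  - apply INR_lt. apply (Rmult_lt_reg_r (/ INR n)); [apply Rinv_0_lt_compat, hnR |].
    unfold Rdiv in hN2, hN3. lra.
Qed.

Lemma is_lim_seq_record_pair_df (j k : nat -> nat) (c v : nat -> R) (lam1 lam2 gc gv : R) :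
  0 < lam1 -> lam1 < lam2 ->
  is_lim_seq (fun n => INR (j n) / INR n) lam1 -> is_lim_seq (fun n => INR (k n) / INR n) lam2 ->
  (forall n, 0 <= c n <= 1) -> (forall n, 0 <= v n <= 1) ->
  is_lim_seq (fun n => c n ^ n) gc -> is_lim_seq (fun n => v n ^ n) gv ->
  is_lim_seq (fun n => record_pair_df (j n) (k n) (c n) (v n))
    (rpow gv lam2 - rpow gc lam1 * (lam2 / (lam2 - lam1) * rpow gv (lam2 - lam1)
                                    - lam1 / (lam2 - lam1) * rpow gc (lam2 - lam1))).
Proof.
  intros hlam1 hlam12 hj hk hc hv hgc hgv.
  pose proof (eventually_index_order j k lam1 lam2 hlam1 hlam12 hj hk) as [N hN].
  assert (he : is_lim_seq (fun n => INR (k n - j n) / INR n) (lam2 - lam1)).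
  { apply (is_lim_seq_ext_loc (fun n => INR (k n) / INR n - INR (j n) / INR n)).
    - exists N. intros n hn. destruct (hN n hn) as [hn1 [_ hjk]].
      rewrite minus_INR by lia. field. apply not_0_INR. lia.
    - apply is_lim_seq_minus'; assumption. }
  assert (hratio : forall (i : nat -> nat) (lam : R), is_lim_seq (fun n => INR (i n) / INR n) lam ->
            is_lim_seq (fun n => INR (i n) / INR (k n - j n)) (lam / (lam2 - lam1))).
  { intros i lam hi.
    apply (is_lim_seq_ext_loc (fun n => (INR (i n) / INR n) / (INR (k n - j n) / INR n))).
    - exists N. intros n hn. destruct (hN n hn) as [hn1 [_ hjk]].
      field. split; apply not_0_INR; lia.
    - apply is_lim_seq_div'; [exact hi | exact he | lra]. }
  unfold record_pair_df.
  apply is_lim_seq_minus'; [apply is_lim_seq_pow_rate; auto; lra |].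
  apply is_lim_seq_mult'; [apply is_lim_seq_pow_rate; auto |].
  apply is_lim_seq_minus'; apply is_lim_seq_mult';
    [apply hratio, hk | apply is_lim_seq_pow_rate; auto; lra |
     apply hratio, hj | apply is_lim_seq_pow_rate; auto; lra].
Qed.

Lemma rpow_1_l y : rpow 1 y = 1.
Proof.
  unfold rpow. destruct (Rlt_dec 0 1); [| lra].
  unfold Rpower. rewrite ln_1, Rmult_0_r. apply exp_0.
Qed.

Lemma record_pair_limit_at_1 g l1 l2 : l1 < l2 ->
  rpow 1 l2 - rpow g l1 * (l2 / (l2 - l1) * rpow 1 (l2 - l1) - l1 / (l2 - l1) * rpow g (l2 - l1))
  = l2 / (l2 - l1) * (1 - rpow g l1) - l1 / (l2 - l1) * (1 - rpow g l2).
Proof.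
  intro h. rewrite !rpow_1_l, <- (rpow_mul_sub g l1 l2). field. lra.
Qed.

Lemma record_pair_limit_at_1_pos g l1 l2 : 0 <= g < 1 -> 0 < l1 -> l1 < l2 ->
  0 < l2 / (l2 - l1) * (1 - rpow g l1) - l1 / (l2 - l1) * (1 - rpow g l2).
Proof.
  intros hg hl1 hl12.
  replace (l2 / (l2 - l1) * (1 - rpow g l1) - l1 / (l2 - l1) * (1 - rpow g l2))
    with ((l2 * (1 - rpow g l1) - l1 * (1 - rpow g l2)) / (l2 - l1)) by (field; lra).
  apply Rdiv_lt_0_compat; [| lra].
  unfold rpow. destruct (Rlt_dec 0 g) as [gpos | ]; [| lra].
  (* with [g = exp (- s)], the difference is [phi s], and [phi] increases from [phi 0 = 0] *)
  set (s := - ln g).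
  assert (hs : 0 < s).
  { pose proof (ln_increasing g 1 gpos (proj2 hg)) as hln. rewrite ln_1 in hln. unfold s. lra. }
  set (phi t := l2 * (1 - exp (- l1 * t)) - l1 * (1 - exp (- l2 * t))).
  assert (hphi : forall t, derivable_pt_lim phi t (l1 * l2 * (exp (- l1 * t) - exp (- l2 * t)))).
  { intro t. apply is_derive_Reals. unfold phi. auto_derive; [trivial | ring]. }
  destruct (MVT_cor2 phi _ 0 s hs (fun t _ => hphi t)) as [t [hmvt ht]].
  replace (l2 * (1 - Rpower g l1) - l1 * (1 - Rpower g l2)) with (phi s - phi 0)
    by (unfold phi, Rpower, s; rewrite !Rmult_0_r, exp_0, !Rmult_opp_opp; ring).
  rewrite hmvt. assert (exp (- l2 * t) < exp (- l1 * t)) by (apply exp_increasing; nra).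
  apply Rmult_lt_0_compat; [apply Rmult_lt_0_compat; [nra |] |]; lra.
Qed.

Lemma standardized_le a b x y : 0 < a -> ((x - b) / a <= y <-> x <= a * y + b).
Proof.
  intro ha. assert (x - b = (x - b) / a * a) by (field; lra). split; intro; nra.
Qed.

Lemma standardized_gt a b x u : 0 < a -> ((x - b) / a > u <-> a * u + b < x).
Proof.
  intro ha. assert (x - b = (x - b) / a * a) by (field; lra). split; intro; nra.
Qed.

Theorem mainTheorem11
  (Omega : Type) (M : (Omega -> Prop) -> Prop) (P : (Omega -> Prop) -> R)
  (X : nat -> Omega -> R) (F G : R -> R) (a b : nat -> R)
  (j k : nat -> nat) (lam1 lam2 u y : R)
  (HP : is_probability M P)
  (Hiid : iid_with_cdf M P X F)
  (Hcont : continuity F)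
  (Hdom : in_domain_of_attraction F G a b)
  (Hlam1 : 0 < lam1) (Hlam12 : lam1 < lam2)
  (Hj : Un_cv (fun n => INR (j n) / INR n) lam1)
  (Hk : Un_cv (fun n => INR (k n) / INR n) lam2)
  (Huy : u < y) (HGu : G u < 1) :
  let beta1 := lam1 / (lam2 - lam1) in
  let beta2 := lam2 / (lam2 - lam1) in
  Un_cv
    (fun n =>
       P (fun w => (X (k n) w - b n) / a n <= y /\
                   (X (j n) w - b n) / a n > u /\
                   is_record X (j n) w /\ is_record X (k n) w)
       / P (fun w => (X (j n) w - b n) / a n > u /\
                     is_record X (j n) w /\ is_record X (k n) w))
    ((rpow (G y) lam2
      - rpow (G u) lam1 * (beta2 * rpow (G y) (lam2 - lam1)
                           - beta1 * rpow (G u) (lam2 - lam1)))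
     / (beta2 * (1 - rpow (G u) lam1) - beta1 * (1 - rpow (G u) lam2))).
Proof.
  intros beta1 beta2. destruct Hdom as [_ [Ha Hconv]].
  apply is_lim_seq_Reals in Hj, Hk. apply is_lim_seq_Reals.
  set (c n := F (a n * u + b n)). set (v n := F (a n * y + b n)).
  assert (hc : forall n, 0 <= c n <= 1) by (intro; apply (F_range HP Hiid)).
  assert (hv : forall n, 0 <= v n <= 1) by (intro; apply (F_range HP Hiid)).
  assert (hGu : is_lim_seq (fun n => c n ^ n) (G u)) by apply is_lim_seq_Reals, Hconv.
  assert (hGu0 : 0 <= G u) by (apply (is_lim_seq_pow_ge0 c); [intro; apply hc | exact hGu]).
  apply (is_lim_seq_ext_loc (fun n => record_pair_df (j n) (k n) (c n) (v n)
                                      / record_pair_df (j n) (k n) (c n) 1)).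
  - destruct (eventually_index_order j k lam1 lam2 Hlam1 Hlam12 Hj Hk) as [N hN].
    exists N. intros n hn. destruct (hN n hn) as [_ [hj1 hjk]].
    unfold c, v. symmetry.
    rewrite <- (P_record_pair_ratio HP Hiid Hcont (j n) (k n)) by (auto; pose proof (Ha n); nra).
    f_equal; apply P_ext; intro w; rewrite ?standardized_le, ?standardized_gt by apply Ha; tauto.
  - apply is_lim_seq_div'.
    + apply is_lim_seq_record_pair_df; auto. apply is_lim_seq_Reals, Hconv.
    + unfold beta1, beta2. rewrite <- record_pair_limit_at_1 by exact Hlam12.
      apply is_lim_seq_record_pair_df; auto; [intro; lra |].
      apply (is_lim_seq_ext (fun _ => 1)); [intro; rewrite pow1; reflexivity |].
      apply is_lim_seq_const.
    + apply Rgt_not_eq, record_pair_limit_at_1_pos; auto.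
Qed.
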